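(* Let $(L,\preceq,\bot,\top)$ be a bounded lattice with at least three elements. Every non-empty family of minimal blocks of $L$ in which no block is repeated is a family of independent blocks.
   Context: For $k\in L$ let ${\uparrow}k=\{x\in L\mid k\preceq x\}$ and ${\downarrow}k=\{x\in L\mid x\preceq k\}$. A block of $L$ is a sublattice $K\subsetneq L$ (a proper subset) such that $K\setminus\{\bot,\top\}\neq\varnothing$ and $({\uparrow}k\cup{\downarrow}k)\setminus\{\bot,\top\}\subseteq K$ for every $k\in K\setminus\{\bot,\top\}$. A block $K$ is minimal if there is no block $K'$ of $L$ with $K'\subsetneq K$. Two blocks $K_1,K_2$ are independent if $K_1\cap K_2\subseteq\{\bot,\top\}$; a family of blocks is a family of independent blocks if its members are pairwise independent. *)

From HB Require Import structures.
From mathcomp Require Import all_boot all_order.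
Set Implicit Arguments. Unset Strict Implicit. Unset Printing Implicit Defensive.
Import Order.TTheory.
Local Open Scope order_scope.

Section Blocks.
Context {d : Order.disp_t} {L : tbLatticeType d}.

(* subsets of L are predicates (L may be infinite) *)
Definition sublattice (K : L -> Prop) : Prop :=
  forall x y, K x -> K y -> K (x `&` y) /\ K (x `|` y).

Definition subset_of (A B : L -> Prop) : Prop := forall x, A x -> B x.

Definition proper_subset_of (A B : L -> Prop) : Prop :=
  subset_of A B /\ exists x, B x /\ ~ A x.

Definition is_block (K : L -> Prop) : Prop :=
  [/\ sublattice K,
      (exists x : L, ~ K x),
      (exists k, K k /\ k <> \bot /\ k <> \top)
    & forall k, K k -> k <> \bot -> k <> \top ->
        forall x, (k <= x \/ x <= k) -> x <> \bot -> x <> \top -> K x].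

Definition minimal_block (K : L -> Prop) : Prop :=
  is_block K /\ forall K', is_block K' -> ~ proper_subset_of K' K.

Definition independent (K1 K2 : L -> Prop) : Prop :=
  forall x, K1 x -> K2 x -> x = \bot \/ x = \top.

End Blocks.

From HB Require Import structures.
From mathcomp Require Import all_boot all_order.
From Stdlib Require Import Classical.
Set Implicit Arguments. Unset Strict Implicit. Unset Printing Implicit Defensive.
Local Open Scope order_scope.

(* Two blocks sharing an element other than bot and top meet in a block.  If
   both are minimal, that intersection cannot be a proper sub-block of either,
   so each is contained in the other and the two blocks coincide. *)

Section MinimalBlocks.
Context {d : Order.disp_t} {L : tbLatticeType d}.
Implicit Types A B : L -> Prop.

Lemma sublatticeI A B :
  sublattice A -> sublattice B -> sublattice (fun y => A y /\ B y).
Proof.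
move=> sA sB u v [Au Bu] [Av Bv].
have [AI AU] := sA u v Au Av; have [BI BU] := sB u v Bu Bv.
by split; split.
Qed.

Lemma is_blockI A B x :
  is_block A -> is_block B -> A x -> B x -> x <> \bot -> x <> \top ->
  is_block (fun y => A y /\ B y).
Proof.
move=> [sA [z nAz] _ cA] [sB _ _ cB] Ax Bx xb xt; split.
- exact: sublatticeI.
- by exists z => -[].
- by exists x.
- move=> k [Ak Bk] kb kt y ky yb yt.
  by split; [exact: cA k Ak kb kt y ky yb yt | exact: cB k Bk kb kt y ky yb yt].
Qed.

Lemma minimal_block_sub A B x :
  minimal_block A -> is_block B -> A x -> B x -> x <> \bot -> x <> \top ->
  subset_of A B.
Proof.
move=> [bA minA] bB Ax Bx xb xt y Ay; apply: NNPP => nBy.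
apply: (minA _ (is_blockI bA bB Ax Bx xb xt)); split; first by move=> z [].
by exists y; split => // -[].
Qed.

Lemma minimal_blocks_independent A B :
  minimal_block A -> minimal_block B -> ~ (forall x, A x <-> B x) ->
  independent A B.
Proof.
move=> mA mB neqAB x Ax Bx.
have [-> | /eqP xb] := eqVneq x \bot; first by left.
have [-> | /eqP xt] := eqVneq x \top; first by right.
exfalso; apply: neqAB => y; split.
- exact: minimal_block_sub mA mB.1 Ax Bx xb xt y.
- exact: minimal_block_sub mB mA.1 Bx Ax xb xt y.
Qed.

End MinimalBlocks.

Theorem proposition20 (d : Order.disp_t) (L : tbLatticeType d)
  (three : exists a b c : L, [/\ a <> b, b <> c & a <> c])
  (I : Type) (F : I -> (L -> Prop))
  (nonempty : inhabited I)
  (minF : forall i, minimal_block (F i))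
  (norep : forall i j, i <> j -> ~ (forall x, F i x <-> F j x)) :
  forall i j, i <> j -> independent (F i) (F j).
Proof.
move=> i j ij.
exact: minimal_blocks_independent (minF i) (minF j) (norep i j ij).
Qed.
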